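(* Let $F$ be a Legendre function, $\pi_0\in\Pi_{\mathrm{all}}$, and $\Pi\subseteq\Pi_{\mathrm{all}}$ closed and convex. Suppose a mechanism produces $\widehat\pi_F\in\Pi$ such that for every $\pi^*\in\Pi$, $$\mathbb{E}[\mathsf{B}_F(\pi^*(x)\parallel\widehat\pi_F(x))]\le\mathbb{E}[\mathsf{B}_F(\pi^*(x)\parallel\pi_0(x))]-\mathbb{E}[\mathsf{B}_F(\widehat\pi_F(x)\parallel\pi_0(x))],$$ and assume that almost everywhere the relevant values lie in the interior of the domain of $F$. Let $\{\mathcal{X}_i\}_{i\in I}$ be the partition of $\mathcal{X}$ given by $x\sim x'\iff\widehat\pi_F(x)=\widehat\pi_F(x')$ and $\mathcal{C}_F=\{\pi\in\Pi:\pi(x)=\pi(x')\ \forall x,x'\in\mathcal{X}_i,\ \forall i\in I\}$. Then $\widehat\pi_F=\arg\min_{\pi\in\Pi\cap\mathcal{C}_F}\mathbb{E}[\mathsf{B}_F(\pi(x)\parallel\pi_0(x))]$, i.e., $\widehat\pi_F$ is the unique Bregman projection of $\pi_0$ onto $\Pi\cap\mathcal{C}_F$.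
   Context: $\mathcal{X},\mathcal{Y}$ finite; $\Pi_{\mathrm{all}}=\Delta(\mathcal{Y})^{\mathcal{X}}$; $\mathcal{D}_{\mathcal{X}}$ full-support distribution on $\mathcal{X}$ and $\mathbb{E}=\mathbb{E}_{x\sim\mathcal{D}_{\mathcal{X}}}$. $\mathsf{B}_F(p\parallel q)=F(p)-F(q)-\langle\nabla F(q),p-q\rangle$. A Legendre function is proper, closed, convex, differentiable on the interior $\Omega$ of its domain, with $\nabla F\colon\Omega\to\mathrm{int}(\mathrm{dom}F^* )$ a bijection. *)

From HB Require Import structures.
From mathcomp Require Import all_boot all_order all_algebra.
From mathcomp Require Import all_classical all_reals all_analysis.
Set Implicit Arguments. Unset Strict Implicit. Unset Printing Implicit Defensive.
Import Order.TTheory GRing.Theory Num.Theory.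
Import numFieldNormedType.Exports.
Local Open Scope classical_set_scope.
Local Open Scope ring_scope.

(* Convention: the finite label set Y is identified with 'I_n; a vector of
   R^Y is a row vector 'rV[R]_n (normed space from MathComp-Analysis).       *)

Section Defs.
Variables (R : realType) (n : nat).
Local Notation V := 'rV[R]_n.

Definition dotv (u v : V) : R := \sum_(i < n) u ord0 i * v ord0 i.

Definition simplex : set V :=
  [set p | (forall i, 0 <= p ord0 i) /\ \sum_(i < n) p ord0 i = 1].

Definition edom (F : V -> \bar R) : set V := [set x | (F x < +oo)%E].

Definition Omega (F : V -> \bar R) : set V := interior (edom F).

(* real-valued restriction of F (meaningful on dom F) *)
Definition Fr (F : V -> \bar R) : V -> R := fun x => fine (F x).

Definition gradF (F : V -> \bar R) (q : V) : V :=
  \row_(i < n) derive (Fr F) q (delta_mx ord0 i : V).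

Definition conjF (F : V -> \bar R) (y : V) : \bar R :=
  ereal_sup [set ((dotv x y)%:E - F x)%E | x in [set: V]].

(* Legendre function: proper, closed (lsc, i.e. closed epigraph), convex,
   differentiable on Omega = int(dom F), and grad F : Omega -> int(dom F^* )
   is a bijection. *)
Definition legendre (F : V -> \bar R) : Prop :=
  [/\
      (forall x, F x != -oo%E) /\ (exists x, (F x < +oo)%E),
      closed [set xt : V * R | (F xt.1 <= xt.2%:E)%E],
      (forall (x y : V) (a b t : R), 0 <= t <= 1 ->
          (F x <= a%:E)%E -> (F y <= b%:E)%E ->
          (F (t *: x + (1 - t) *: y)%R <= (t * a + (1 - t) * b)%R%:E)%E),
      (forall q, Omega F q -> differentiable (Fr F) q) &
      [/\ (forall q, Omega F q -> Omega (conjF F) (gradF F q)),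
          (forall q q', Omega F q -> Omega F q' -> gradF F q = gradF F q' -> q = q') &
          (forall y, Omega (conjF F) y -> exists2 q, Omega F q & gradF F q = y)]].

Definition bregman (F : V -> \bar R) (p q : V) : R :=
  Fr F p - Fr F q - dotv (gradF F q) (p - q).

End Defs.

Definition expect (R : realType) (X : finType) (D : X -> R) (f : X -> R) : R :=
  \sum_(x : X) D x * f x.

Definition full_support_distr (R : realType) (X : finType) (D : X -> R) : Prop :=
  (forall x, 0 < D x) /\ \sum_(x : X) D x = 1.

Definition Pi_all (R : realType) (n : nat) (X : finType) : set (X -> 'rV[R]_n) :=
  [set pi | forall x, simplex (pi x)].

Definition convex_set_pol (R : realType) (n : nat) (X : finType)
    (P : set (X -> 'rV[R]_n)) : Prop :=
  forall p q (t : R), P p -> P q -> 0 <= t <= 1 ->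
    P (fun x => t *: p x + (1 - t) *: q x).

Definition C_F (R : realType) (n : nat) (X : finType)
    (P : set (X -> 'rV[R]_n)) (pihat : X -> 'rV[R]_n) : set (X -> 'rV[R]_n) :=
  [set pi | P pi /\ forall x x', pihat x = pihat x' -> pi x = pi x'].

(* Bregman divergences are nonnegative (gradient inequality for convex F), so
   pihat minimises E B(. || pi0) over Pi, hence over Pi /\ C_F, which contains
   it.  Any other minimiser pi there has E B(pi || pihat) <= 0, so by full
   support B(pi x || pihat x) = 0 for every x.  Finally B(p || q) = 0 forces
   p = q: the tangent of F at q touches F at p, so the differentials of F at p
   and q coincide, and grad F is injective on Omega. *)

From HB Require Import structures.
From mathcomp Require Import all_boot all_order all_algebra.
From mathcomp Require Import all_classical all_reals all_analysis.
From mathcomp Require Import ring lra.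
Set Implicit Arguments. Unset Strict Implicit.
Import Order.TTheory GRing.Theory Num.Theory.
Import numFieldNormedType.Exports.
Local Open Scope classical_set_scope.
Local Open Scope ring_scope.

Section OneSidedDifferenceQuotients.
Variables (R : realType) (V : normedModType R).

Lemma diff_le_of_quotient_le (f : V -> R) a v c : differentiable f a ->
  (\forall t \near 0^'+, t^-1 * (f (t *: v + a) - f a) <= c) -> 'd f a v <= c.
Proof.
move=> df quot_le; rewrite -deriveE //; apply: cvgr_to_le quot_le.
exact/cvg_dnbhs_at_right/diff_derivable.
Qed.

Lemma diff_ge_of_quotient_ge (f : V -> R) a v c : differentiable f a ->
  (\forall t \near 0^'+, c <= t^-1 * (f (t *: v + a) - f a)) -> c <= 'd f a v.
Proof.
move=> df quot_ge; rewrite -deriveE //; apply: cvgr_to_ge quot_ge.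
exact/cvg_dnbhs_at_right/diff_derivable.
Qed.

Lemma near_right_shift (a v : V) (A : set V) : nbhs a A ->
  \forall t \near 0^'+, A (t *: v + a).
Proof.
move=> Aa; have shift_cvg : (t *: v + a) @[t --> 0^'+] --> a.
  apply: cvg_at_right_filter; rewrite -[X in _ --> X]add0r -(scale0r v).
  by apply: cvgD; [apply: cvgZ; [exact: cvg_id | exact: cvg_cst] | exact: cvg_cst].
exact: shift_cvg.
Qed.

End OneSidedDifferenceQuotients.

Lemma additive_eq_of_le (R : numDomainType) (U : zmodType) (f g : {additive U -> R}) :
  (forall v, f v <= g v) -> f =1 g.
Proof.
move=> f_le_g v; apply: le_anti; rewrite f_le_g /=.
by rewrite -lerN2 -!raddfN f_le_g.
Qed.

Section BregmanDivergence.
Variables (R : realType) (n : nat) (F : 'rV[R]_n -> \bar R).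
Local Notation V := 'rV[R]_n.

Hypothesis F_proper : forall x, F x != -oo%E.
Hypothesis F_convex : forall (x y : V) (a b t : R), 0 <= t <= 1 ->
  (F x <= a%:E)%E -> (F y <= b%:E)%E ->
  (F (t *: x + (1 - t) *: y) <= (t * a + (1 - t) * b)%:E)%E.
Hypothesis F_diff : forall q, Omega F q -> differentiable (Fr F) q.

Lemma dotv_gradF q v : differentiable (Fr F) q -> dotv (gradF F q) v = 'd (Fr F) q v.
Proof.
move=> dF; rewrite [in RHS](row_sum_delta v) linear_sum.
by apply: eq_bigr => i _; rewrite linearZ mxE -deriveE // mulrC.
Qed.

Lemma gradF_eq q p : Omega F q -> Omega F p ->
  'd (Fr F) q =1 'd (Fr F) p -> gradF F q = gradF F p.
Proof.
move=> Oq Op dqp; apply/rowP => i; rewrite !mxE.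
rewrite (deriveE _ (F_diff Oq)) (deriveE _ (F_diff Op)).
exact: dqp.
Qed.

Lemma Omega_edom x : Omega F x -> edom F x.
Proof. exact: nbhs_singleton. Qed.

Lemma EFin_Fr x : edom F x -> (Fr F x)%:E = F x.
Proof. by move=> Fx; rewrite fineK // fin_numE F_proper lt_eqF. Qed.

Lemma Fr_convex x y t : edom F x -> edom F y -> 0 <= t <= 1 ->
  Fr F (t *: x + (1 - t) *: y) <= t * Fr F x + (1 - t) * Fr F y.
Proof.
move=> Fx Fy t01.
have Fx_le : (F x <= (Fr F x)%:E)%E by rewrite EFin_Fr.
have Fy_le : (F y <= (Fr F y)%:E)%E by rewrite EFin_Fr.
have F_comb := F_convex t01 Fx_le Fy_le.
by rewrite -lee_fin EFin_Fr //; exact: le_lt_trans F_comb (ltry _).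
Qed.

Lemma tangent_le_Fr q z : Omega F q -> edom F z ->
  Fr F q + dotv (gradF F q) (z - q) <= Fr F z.
Proof.
move=> Oq Fz; rewrite dotv_gradF; last exact: F_diff.
rewrite addrC -lerBrDr.
apply: diff_le_of_quotient_le; first exact: F_diff.
near=> t.
have t0 : 0 < t by near: t; exact: nbhs_right_gt.
have t1 : t <= 1 by near: t; exact: nbhs_right_le.
have -> : t *: (z - q) + q = t *: z + (1 - t) *: q by apply/rowP => i; rewrite !mxE; ring.
rewrite ler_pdivrMl // lerBlDr.
apply: le_trans (Fr_convex Fz (Omega_edom Oq) _) _; first by rewrite (ltW t0).
lra.
Unshelve. all: by end_near.
Qed.

Lemma bregman_ge0 p q : edom F p -> Omega F q -> 0 <= bregman F p q.
Proof.
by move=> Fp Oq; rewrite /bregman subr_ge0 lerBrDl tangent_le_Fr.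
Qed.

Lemma diff_le_of_bregman_eq0 p q : Omega F p -> Omega F q -> bregman F p q = 0 ->
  forall v, 'd (Fr F) q v <= 'd (Fr F) p v.
Proof.
move=> Op Oq; rewrite /bregman dotv_gradF; last exact: F_diff.
move=> /eqP; rewrite subr_eq0 subr_eq => /eqP Fr_p v.
apply: diff_ge_of_quotient_ge; first exact: F_diff.
(* [F] minus its tangent at [q] is nonnegative and vanishes at [p]. *)
have Fv := near_right_shift v Op.
near=> t.
have t0 : 0 < t by near: t; exact: nbhs_right_gt.
have Fvt : edom F (t *: v + p) by near: t; exact: Fv.
have := tangent_le_Fr Oq Fvt.
rewrite dotv_gradF; last exact: F_diff.
rewrite -addrA linearD linearZ /= ler_pdivlMl // Fr_p.
rewrite -[t *: 'd _ _ _]/(t * _); lra.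
Unshelve. all: by end_near.
Qed.

Hypothesis gradF_inj : forall q q', Omega F q -> Omega F q' ->
  gradF F q = gradF F q' -> q = q'.

Lemma bregman_eq0 p q : Omega F p -> Omega F q -> bregman F p q = 0 -> p = q.
Proof.
move=> Op Oq /(diff_le_of_bregman_eq0 Op Oq)/additive_eq_of_le dqp.
by apply: gradF_inj => //; apply/esym/gradF_eq.
Qed.

End BregmanDivergence.

Section Expectation.
Variables (R : realType) (X : finType) (D : X -> R).
Hypothesis D_pos : forall x, 0 < D x.

Lemma expect_ge0 f : (forall x, 0 <= f x) -> 0 <= expect D f.
Proof. by move=> f_ge0; apply: sumr_ge0 => x _; rewrite mulr_ge0 // ltW. Qed.

Lemma expect_eq0 f : (forall x, 0 <= f x) -> expect D f = 0 -> forall x, f x = 0.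
Proof.
move=> f_ge0 Ef0 x.
have Df_ge0 x' : true -> 0 <= D x' * f x' by rewrite mulr_ge0 // ltW.
have /eqP := psumr_eq0P Df_ge0 Ef0 (i := x) isT.
by rewrite mulf_eq0 gt_eqF //= => /eqP.
Qed.

End Expectation.

Lemma pythagorean_unique_argmin (R : realFieldType) (T : Type) (S : set T)
    (d : T -> T -> R) (o h : T) :
  S h -> (forall p, S p -> 0 <= d p h) -> (forall p, S p -> d p h = 0 -> p = h) ->
  (forall p, S p -> d p h <= d p o - d h o) ->
  [set p | S p /\ forall p', S p' -> d p o <= d p' o] = [set h].
Proof.
move=> Sh d_ge0 d_eq0 pythagorean; apply/seteqP; split => [p [Sp p_min] | _ ->] /=.
- apply: d_eq0 => //; apply: le_anti; rewrite d_ge0 // andbT.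
  by have := pythagorean p Sp; have := p_min h Sh; lra.
- by split => // p Sp; have := pythagorean p Sp; have := d_ge0 p Sp; lra.
Qed.

Theorem theorem16 (R : realType) (n : nat) (X : finType) (D : X -> R)
  (F : 'rV[R]_n -> \bar R) (pi0 pihat : X -> 'rV[R]_n)
  (Pi : set (X -> 'rV[R]_n)) :
  full_support_distr D ->
  legendre F ->
  @Pi_all R n X pi0 ->
  Pi `<=` @Pi_all R n X -> closed (Pi : set {ptws X -> 'rV[R]_n}) -> convex_set_pol Pi ->
  Pi pihat ->
  (forall pistar, Pi pistar ->
     expect D (fun x => bregman F (pistar x) (pihat x))
       <= expect D (fun x => bregman F (pistar x) (pi0 x))
          - expect D (fun x => bregman F (pihat x) (pi0 x))) ->
  (* relevant values lie in the interior of dom F *)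
  (forall x, Omega F (pi0 x)) ->
  (forall pi, Pi pi -> forall x, Omega F (pi x)) ->
  [set pi | (Pi `&` C_F Pi pihat) pi /\
            forall pi', (Pi `&` C_F Pi pihat) pi' ->
              expect D (fun x => bregman F (pi x) (pi0 x))
                <= expect D (fun x => bregman F (pi' x) (pi0 x))]
  = [set pihat].
Proof.
move=> [D_pos _] [[F_proper _] _ F_convex F_diff [_ gradF_inj _]] _ _ _ _.
move=> Pi_pihat pythagorean _ Omega_Pi.
have Omega_pihat := Omega_Pi _ Pi_pihat.
apply: (pythagorean_unique_argmin
          (d := fun p q => expect D (fun x => bregman F (p x) (q x)))).
- by split=> //; split=> // x x' ->.
- move=> p [Pi_p _]; apply: expect_ge0 => // x.
  exact: bregman_ge0 (Omega_edom (Omega_Pi _ Pi_p x)) (Omega_pihat x).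
- move=> p [Pi_p _] /(expect_eq0 D_pos) p_pihat; apply/funext => x.
  apply: bregman_eq0 (Omega_Pi _ Pi_p x) (Omega_pihat x) _ => //.
  apply: p_pihat => x'.
  exact: bregman_ge0 (Omega_edom (Omega_Pi _ Pi_p x')) (Omega_pihat x').
- by move=> p [Pi_p _]; exact: pythagorean.
Qed.
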